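(* Let $d\ge1$, let $R_1,\dots,R_k$ be a fixed sequence of subsets of $V$, each of size $1$ or $2$, and let $i\in V$. Suppose $|R_1|=2$ and $i\in R_1$. Run Algorithm 1 on $R_1,\dots,R_k$. Let $\mu^i$ be the expected number of rounds in which $i$ is matched. Let $\mu^i_{\mathrm{receiver}}$ be the same expectation conditioned on round $1$ being a receiver round, and $\mu^i_{\mathrm{sender}}$ the same expectation conditioned on round $1$ being a sender round. Then $$\mu^i_{\mathrm{receiver}}\le\mu^i\le\mu^i_{\mathrm{sender}}.$$
   Context: Online correlated rental setting: there is a finite set $V$ of offline vertices and an integer $d\ge1$. Proposals (subsets of $V$ of size $1$ or $2$) are revealed one per round; at each round the algorithm selects one vertex of the proposal. An offline vertex $i$ is matched at round $j$ if it is selected at round $j$ and was not matched at any round $t$ with $j-d<t<j$. Algorithm 1: it keeps a state $\tau_{i,t}\in\{\mathrm{sel},\mathrm{nsel},\mathrm{unk}\}$ for every $i$ and round $t$, initially all $\mathrm{unk}$. All random draws are fresh and independent. ''Reset $i$'' at round $j$ means setting $\tau_{i,t}=\mathrm{unk}$ for all $t\in[j+1,j+d-1]$. (1) If the proposal at round $j$ is $\{i_1\}$: reset $i_1$ and select $i_1$. (2) If the proposal is $\{i_1,i_2\}$: with probability $1/2$ the round is a sender, and otherwise it is a receiver. - Sender: draw $\ell,m\in\{1,2\}$ independently and uniformly. Reset $i_{3-m}$. Set $\tau_{i_m,t}=\mathrm{sel}$ for $t\in[j+1,j+d-1]$ if $\ell=m$, and $\mathrm{nsel}$ otherwise. Select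 $i_\ell$. - Receiver: draw $m\in\{1,2\}$ uniformly. If $\tau_{i_m,j}=\mathrm{sel}$, let $\ell=3-m$; if $\tau_{i_m,j}=\mathrm{nsel}$, let $\ell=m$; otherwise draw $\ell$ uniformly from $\{1,2\}$. Reset $i_1,i_2$. Select $i_\ell$. *)

From mathcomp Require Import all_boot all_order all_algebra.
Unset Strict Implicit. Unset Printing Implicit Defensive.
Import Order.TTheory GRing.Theory Num.Theory.

Inductive tstate := Sel | NSel | Unk.

(* random draws of one round: ((s, a), b).
   s = true : sender round (prob 1/2).
   Sender:   l = (if a then 1 else 2),  m = (if b then 1 else 2).
   Receiver: m = (if a then 1 else 2),  fallback l = (if b then 1 else 2).
   Unused draws are irrelevant (all draws fresh, independent, uniform). *)
Definition draw := (bool * bool * bool)%type.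

Section Alg.
Variables (V : finType) (d : nat).

Definition tauT := V -> nat -> tstate.

Definition setrange (tf : tauT) (x : V) (j : nat) (v : tstate) : tauT :=
  fun y t => if (y == x) && (j < t < j + d) then v else tf y t.

Definition reset (tf : tauT) (x : V) (j : nat) : tauT := setrange tf x j Unk.

(* one round j (0-based) with proposal R and draws w:
   returns the new state and the selected vertex (None only for
   ill-formed proposals). Proposal {i1,i2} is labelled by enum R. *)
Definition step (j : nat) (R : {set V}) (w : draw) (tf : tauT)
  : tauT * option V :=
  match enum R with
  | [:: i1] => (reset tf i1 j, Some i1)
  | [:: i1; i2] =>
      let pick (one : bool) := if one then i1 else i2 in
      let: (s, a, b) := w in
      if s then (* sender: l <-> a, m <-> b *)
        let tf1 := reset tf (pick (~~ b)) j in
        (setrange tf1 (pick b) j (if a == b then Sel else NSel), Some (pick a))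
      else (* receiver: m <-> a *)
        let l := match tf (pick a) j with
                 | Sel => ~~ a | NSel => a | Unk => b end in
        (reset (reset tf i1 j) i2 j, Some (pick l))
  | _ => (tf, None)
  end.

(* Vertex i is matched
   at round j iff it is selected at j and not matched at any t, j-d<t<j. *)
Fixpoint nmatched (i : V) (j : nat) (Rs : seq {set V}) (om : nat -> draw)
    (tf : tauT) (lasti : option nat) : nat :=
  match Rs with
  | [::] => 0
  | R :: Rs' =>
      let: (tf', sel) := step j R (om j) tf in
      let m := (sel == Some i) &&
               (if lasti is Some t then d <= j - t else true) in
      m + nmatched i j.+1 Rs' om tf' (if m then Some j else lasti)
  end.

Definition tau0 : tauT := fun _ _ => Unk.

(* outcome space: independent uniform draws for each of the k rounds *)
Definition omega (k : nat) := {ffun 'I_k -> draw}.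

Definition draws (k : nat) (w : omega k) : nat -> draw :=
  fun j => if insub j is Some o then w o else (false, false, false).

Definition count_matched (i : V) (Rs : seq {set V}) (w : omega (size Rs)) : nat :=
  nmatched i 0 Rs (draws (size Rs) w) tau0 None.

Definition cond_exp (i : V) (Rs : seq {set V}) (P : pred (omega (size Rs))) : rat :=
  ((\sum_(w : omega (size Rs) | P w) (count_matched i Rs w)%:R)
     / #|[pred w | P w]|%:R)%R.

Definition mu (i : V) Rs := cond_exp i Rs predT.
Definition sender_round1 (k : nat) (w : omega k) : bool := (draws k w 0).1.1.
Definition mu_sender (i : V) Rs := cond_exp i Rs (sender_round1 (size Rs)).
Definition mu_receiver (i : V) Rs :=
  cond_exp i Rs (fun w => ~~ sender_round1 (size Rs) w).
End Alg.

(* Pair each outcome whose first round is a sender round with the outcome in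
   which that round is the receiver round drawing m first and falling back on
   l.  Both select the same vertex in round 1; they differ only in the state
   the sender records for vertex m during the next d - 1 rounds.  A later
   receiver round that reads this state is steered towards i (or i cannot be
   matched then anyway), and matching i earlier costs at most the one match it
   gains, so the sender outcome matches i at least as often as its partner.
   The two conditioning events have the same probability, hence mu is the
   midpoint of mu_receiver and mu_sender. *)

From mathcomp Require Import all_boot all_order all_algebra.
From mathcomp Require Import zify ring.
Import Order.TTheory GRing.Theory Num.Theory.

Section Average.
Variables (R : realFieldType) (T : finType).
Local Open Scope ring_scope.

Definition average (P : pred T) (g : T -> R) : R :=
  (\sum_(x | P x) g x) / #|[pred x | P x]|%:R.

Lemma average_involution_bounds (P : pred T) (f : T -> T) (g : T -> R) :
  involutive f -> (forall x, P (f x) = ~~ P x) -> (exists x, P x) ->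
  (forall x, P x -> g (f x) <= g x) ->
  average (fun x => ~~ P x) g <= average predT g <= average P g.
Proof.
move=> fK fP [x0 Px0] g_le.
have card_compl : #|[pred x | ~~ P x]| = #|[pred x | P x]|.
  rewrite -!sum1_card (reindex_inj (can_inj fK)); apply: eq_bigl => x.
  by rewrite !inE fP negbK.
have card_split : #|[pred x : T | predT x]| = (#|[pred x | P x]| + #|[pred x | ~~ P x]|)%N.
  by rewrite -!sum1_card [LHS](bigID P); congr (_ + _)%N; apply: eq_bigl.
have sum_split : \sum_(x | predT x) g x = \sum_(x | P x) g x + \sum_(x | ~~ P x) g x.
  exact: bigID.
have sum_compl : \sum_(x | ~~ P x) g x = \sum_(x | P x) g (f x).
  by rewrite (reindex_inj (can_inj fK)); apply: eq_bigl => x; rewrite fP negbK.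
have n_gt0 : 0 < #|[pred x | P x]|%:R :> R.
  by rewrite ltr0n; apply/card_gt0P; exists x0.
have sum_le : \sum_(x | P x) g (f x) <= \sum_(x | P x) g x by exact: ler_sum.
rewrite /average card_split card_compl sum_split sum_compl natrD.
move: n_gt0 sum_le; set n := #|_|%:R; set p := \sum_(x | P x) g x.
set q := \sum_(x | P x) g (f x) => n_gt0 q_le_p.
have -> : (p + q) / (n + n) = (q / n + p / n) / 2.
  by field; rewrite !gt_eqF ?addr_gt0.
have avg_le : q / n <= p / n by rewrite ler_pM2r ?invr_gt0.
by have [-> ->] := midf_le avg_le.
Qed.
End Average.

Lemma tstate_eq_or_neq (x y : tstate) : x = y \/ x <> y.
Proof. by case: x; case: y; (by left) || (by right). Qed.

Section Matching.
Variables (V : finType) (d : nat) (i : V).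

Notation nm := (nmatched V d i).

Definition free_at (j : nat) (L : option nat) : bool :=
  if L is Some t then d <= j - t else true.

Definition next_free (j : nat) (L : option nat) : nat :=
  if L is Some t then maxn j (t + d) else j.

Lemma step_eq_from j R w (tf1 tf2 : tauT V) :
  (forall y t, j <= t -> tf1 y t = tf2 y t) ->
  (step V d j R w tf1).2 = (step V d j R w tf2).2 /\
  forall y t, j < t -> (step V d j R w tf1).1 y t = (step V d j R w tf2).1 y t.
Proof.
move=> eq_tf; have eq_tf' y t : j < t -> tf1 y t = tf2 y t by move/ltnW; exact: eq_tf.
rewrite /step /reset /setrange.
case: (enum R) => [|x1 [|x2 [|x3 s]]]; [| |case: w => [[[] a] b]|]; rewrite /= ?eq_tf //.
all: by split=> // y t /eq_tf' eq_yt; do ![case: ifP => // _].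
Qed.

Lemma nmatched_eq_from Rs j om1 om2 tf1 tf2 L :
  (forall t, j <= t -> om1 t = om2 t) ->
  (forall y t, j <= t -> tf1 y t = tf2 y t) ->
  nm j Rs om1 tf1 L = nm j Rs om2 tf2 L.
Proof.
elim: Rs j tf1 tf2 L => [|R Rs IH] j tf1 tf2 L eq_om eq_tf //=.
rewrite eq_om //; have [eq_sel eq_tf'] := step_eq_from j R (om2 j) tf1 tf2 eq_tf.
case: (step V d j R (om2 j) tf1) eq_sel eq_tf' => [tf1' s1].
case: (step V d j R (om2 j) tf2) => [tf2' s2] /= <- eq_tf'.
by congr (_ + _); apply: IH => [t|y t] lt_jt; [apply: eq_om|apply: eq_tf']; lia.
Qed.

(* For d = 0 a last match in the future would make [next_free] disagree with
   [free_at]. *)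
Section PositiveDelay.
Hypothesis d_gt0 : 0 < d.

Lemma nmatched_next_free_bounds Rs j om tf L1 L2 :
  next_free j L1 <= next_free j L2 <= next_free j L1 + d ->
  nm j Rs om tf L2 <= nm j Rs om tf L1 <= nm j Rs om tf L2 + 1.
Proof.
elim: Rs j tf L1 L2 => [|R Rs IH] j tf L1 L2 nf_le //=.
case: (step V d j R (om j) tf) => [tf' s] /=.
rewrite -/(free_at j L1) -/(free_at j L2).
case: (s == Some i) => /=; last by apply: IH; move: nf_le; case: L1 L2 => [?|] [?|] /=; lia.
have IHj L1' L2' := IH j.+1 tf' L1' L2'.
case F1: (free_at j L1); case F2: (free_at j L2) => /=;
  [|have := IHj L2 (Some j)| |rewrite !add0n; apply: IHj];
  by move: F1 F2 nf_le; case: L1 L2 => [?|] [?|] /=; lia.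
Qed.

Lemma nmatched_round_le j Rs om tf L (s1 s2 : bool) :
  (s2 -> ~~ s1 -> ~~ free_at j L) ->
  s2 && free_at j L + nm j.+1 Rs om tf (if s2 && free_at j L then Some j else L) <=
  s1 && free_at j L + nm j.+1 Rs om tf (if s1 && free_at j L then Some j else L).
Proof.
case: s1 s2 => [] [] //= sel_free; case F: (free_at j L) => //=.
- have := nmatched_next_free_bounds Rs j.+1 om tf L (Some j); clear sel_free.
  by move: F; case: L => [t|] /=; lia.
- by have := sel_free erefl erefl; rewrite F.
Qed.
End PositiveDelay.

Section BetterState.
Variables (v : V) (val : tstate).

(* [tf1] differs from [tf2] only in that it records [val] for [v] where [tf2]
   records nothing, and reading [val] in round [t] can only select [i] when the
   coin of [tf2] would not, unless [i] is not available in round [t]. *)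
Definition favourable t L :=
  [\/ val = Sel /\ v <> i, val = NSel /\ v = i | ~~ free_at t L].

Definition better_state j (tf1 tf2 : tauT V) L := forall y t, j <= t -> tf1 y t <> tf2 y t ->
  [/\ y = v, t < d, tf2 y t = Unk, tf1 y t = val & favourable t L].

Lemma better_state_setrange j tf1 tf2 L x j0 c : better_state j tf1 tf2 L ->
  better_state j (setrange V d tf1 x j0 c) (setrange V d tf2 x j0 c) L.
Proof. by move=> better y t le_jt; rewrite /setrange; case: ifP => // _; exact: better. Qed.

Lemma better_state_next j tf1 tf2 L (m : bool) : better_state j tf1 tf2 L ->
  better_state j.+1 tf1 tf2 (if m && free_at j L then Some j else L).
Proof.
move=> better y t lt_jt neq; have [-> lt_td -> -> fav] := better y t (ltnW lt_jt) neq.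
split=> //; case: (m && free_at j L) => //; apply: Or33 => /=; lia.
Qed.

Lemma step_better_state j R w tf1 tf2 L : better_state j tf1 tf2 L ->
  let: (tf1', s1) := step V d j R w tf1 in
  let: (tf2', s2) := step V d j R w tf2 in
  (s1 = s2 /\ better_state j tf1' tf2' L) \/
  ((forall y t, j < t -> tf1' y t = tf2' y t) /\
   (s2 == Some i -> s1 != Some i -> ~~ free_at j L)).
Proof.
move=> better; rewrite /step /reset.
case: (enum R) => [|x1 [|x2 [|x3 s]]]; [| |case: w => [[[] a] b]|];
  try by left; split=> //; do ?apply: better_state_setrange.
have [eq_v|neq_v] :=
  tstate_eq_or_neq (tf1 (if a then x1 else x2) j) (tf2 (if a then x1 else x2) j).
  by left; rewrite eq_v; split=> //; do 2 apply: better_state_setrange.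
have [vE _ -> -> fav] := better _ j (leqnn j) neq_v.
right; split.
  move=> y t lt_jt; rewrite /setrange.
  case: ifP => // /negbT not_x2; case: ifP => // /negbT not_x1.
  have [//|neq] := tstate_eq_or_neq (tf1 y t) (tf2 y t).
  have [yv lt_td _ _ _] := better y t (ltnW lt_jt) neq.
  by move: not_x1 not_x2; rewrite yv -vE; case: a {neq_v fav vE} => /=; rewrite eqxx /=; lia.
rewrite !(inj_eq Some_inj).
case: fav => [[-> vi]|[-> <-]|//]; last by rewrite -vE eqxx.
move: vi; rewrite -vE; case: a b {vE neq_v} => [] [] /= vi /eqP eq_i;
  by rewrite ?eq_i ?eqxx in vi *.
Qed.

Lemma nmatched_better_state Rs j om tf1 tf2 L : 0 < d -> better_state j tf1 tf2 L ->
  nm j Rs om tf2 L <= nm j Rs om tf1 L.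
Proof.
move=> d_gt0; elim: Rs j tf1 tf2 L => [|R Rs IH] j tf1 tf2 L better //=.
have := step_better_state j R (om j) _ _ _ better.
case: (step V d j R (om j) tf1) => [tf1' s1]; case: (step V d j R (om j) tf2) => [tf2' s2].
case=> [[-> better']|[eq_after sel_le]].
  by rewrite leq_add2l; apply: IH; apply: better_state_next.
rewrite (nmatched_eq_from Rs j.+1 om om tf2' tf1') //; last by move=> y t /eq_after.
exact: (nmatched_round_le d_gt0).
Qed.
End BetterState.
End Matching.

Section Coupling.
Variable k : nat.

(* A sender draw [(true, a, b)] has l <-> a and m <-> b; its image has
   m <-> b and fallback l <-> a. *)
Definition swap_roles (x : draw) : draw := let: (s, a, b) := x in (~~ s, b, a).

Definition swap_round1 (w : omega k.+1) : omega k.+1 :=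
  [ffun o => if o == ord0 then swap_roles (w o) else w o].

Lemma swap_round1K : involutive swap_round1.
Proof.
move=> w; apply/ffunP => o; rewrite !ffunE; case: (o == ord0) => //.
by case: (w o) => [[s a] b] /=; rewrite negbK.
Qed.

Lemma draws0 (w : omega k.+1) : draws k.+1 w 0 = w ord0.
Proof. by rewrite /draws; case: insubP => [o _ o0|] //; congr (w _); apply: val_inj. Qed.

Lemma draws_swap_round1 (w : omega k.+1) j : 0 < j ->
  draws k.+1 (swap_round1 w) j = draws k.+1 w j.
Proof.
move=> j_gt0; rewrite /draws; case: insubP => [o _ oj|] //.
by rewrite ffunE; case: eqP => // o0; move: oj; rewrite o0 /=; lia.
Qed.

Lemma sender_round1_swap w : sender_round1 k.+1 (swap_round1 w) = ~~ sender_round1 k.+1 w.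
Proof. by rewrite /sender_round1 !draws0 ffunE eqxx; case: (w ord0) => [[s a] b]. Qed.
End Coupling.

Lemma enum_card2 (T : finType) (A : {set T}) : #|A| = 2 -> exists x1 x2, enum A = [:: x1; x2].
Proof. by rewrite cardE; case: (enum A) => [|x1 [|x2 [|? ?]]] // _; exists x1, x2. Qed.

Lemma count_matched_swap_round1_le (V : finType) (d : nat) (R1 : {set V}) (Rs : seq {set V})
    (i x1 x2 : V) (w : omega (size Rs).+1) :
  0 < d -> enum R1 = [:: x1; x2] -> i \in R1 -> sender_round1 _ w ->
  count_matched V d i (R1 :: Rs) (swap_round1 _ w) <= count_matched V d i (R1 :: Rs) w.
Proof.
move=> d_gt0 R1E; rewrite -mem_enum R1E !inE => iR1.
rewrite /count_matched /= /step R1E !draws0 ffunE eqxx /sender_round1 draws0.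
case: (w ord0) => [[s a] b] /= ->; rewrite leq_add2l.
have same_draws t : 1 <= t -> draws _ (swap_round1 _ w) t = draws _ w t.
  exact: draws_swap_round1.
rewrite (nmatched_eq_from V d i Rs 1 _ _ _ (tau0 V) _ same_draws); last first.
  by move=> y t _; rewrite /reset /setrange /tau0; do ![case: ifP => //].
apply: (nmatched_better_state V d i (if b then x1 else x2) (if a == b then Sel else NSel)
  _ _ _ _ _ _ d_gt0).
move=> y t le1t; rewrite /reset /setrange /tau0 /=.
case: ifP => [/and3P [/eqP-> _ lt_td] _|_]; last by case: ifP => _ /(_ erefl).
split=> //; rewrite /favourable /free_at !(inj_eq Some_inj) andbT.
have [_ | not_a] := eqVneq (if a then x1 else x2) i; first by apply: Or33; lia.
have other_i : (if ~~ a then x1 else x2) = i.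
  by move: iR1 not_a; case: a => /orP[] /eqP -> //=; rewrite eqxx.
case: eqP => [<- | /eqP a_neq_b]; first by apply: Or31; split=> //; apply/eqP.
by apply: Or32; split=> //; rewrite -other_i; case: a b a_neq_b {not_a other_i} => [] [].
Qed.

Theorem claim3 (V : finType) (d : nat) (R1 : {set V}) (Rs : seq {set V}) (i : V) :
  0 < d ->
  all (fun R : {set V} => (#|R| == 1) || (#|R| == 2)) (R1 :: Rs) ->
  #|R1| = 2 -> i \in R1 ->
  (mu_receiver V d i (R1 :: Rs) <= mu V d i (R1 :: Rs) <= mu_sender V d i (R1 :: Rs))%R.
Proof.
move=> d_gt0 _ /enum_card2 [x1 [x2 R1E]] iR1.
apply: (average_involution_bounds _ _ _ _
  (fun w => (count_matched V d i (R1 :: Rs) w)%:R%R) (swap_round1K _)) => [w||w sender_w].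
- exact: sender_round1_swap.
- by exists [ffun=> (true, true, true)]; rewrite /sender_round1 draws0 ffunE.
- by rewrite ler_nat; apply: count_matched_swap_round1_le R1E iR1 sender_w.
Qed.
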